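(* If $r$ divides $s$, then each of $\nu(n,P^{(r)}_s)$, $\nu^*(n,P^{(r)}_s)$ and $\tau^*(n,P^{(r)}_s)$ equals $\left(\left(\frac{r}{s}\right)^r+o(1)\right)\binom{n}{r}$, where $o(1)\to0$ as $n\to\infty$ with $r,s$ fixed.
   Context: $K^{(r)}_n$ is the ordered complete $r$-uniform hypergraph on $[n]=\{1,\dots,n\}$ with its natural order; a copy of an ordered hypergraph $H$ in $K^{(r)}_n$ is the image of $H$ under an order-preserving injection $V(H)\to[n]$. The natural path $P^{(r)}_s$ has vertices $v_1<\dots<v_s$ and edges all sets of $r$ consecutive vertices $\{v_j,\dots,v_{j+r-1}\}$, $1\le j\le s-r+1$. $\nu(n,H)$ is the maximum number of pairwise edge-disjoint copies of $H$ in $K^{(r)}_n$. A fractional $H$-transversal is a function $w:E(K^{(r)}_n)\to[0,\infty)$ with $\sum_{e\in E(H')}w(e)\ge1$ for every copy $H'$ of $H$; $\tau^*(n,H)$ is the minimum total weight of a fractional $H$-transversal. A fractional $H$-packing is an assignment of weights $w(H')\ge0$ to the copies $H'$ of $H$ in $K^{(r)}_n$ such that for each edge $e$ of $K^{(r)}_n$ the total weight of copies containing $e$ is at most $1$; $\nu^*(n,H)$ is the maximum total weight of a fractional $H$-packing. *)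

From HB Require Import structures.
From mathcomp Require Import all_boot all_order all_algebra.
From mathcomp Require Import boolp classical_sets reals.
Unset Printing Implicit Defensive.
Import Order.TTheory GRing.Theory Num.Theory.

(* Vertices of K^(r)_n are 'I_n = {0,...,n-1} with its natural order.
   An (r-)edge is a set e : {set 'I_n} with #|e| = r.
   An ordered hypergraph copy is represented by its edge set. *)

(* Edges of the natural path P^(r)_s on vertices 'I_s (v_1<...<v_s is 0<...<s-1):
   all sets of r consecutive vertices {j, ..., j+r-1}, with j + r <= s. *)
Definition path_edges (r s : nat) : {set {set 'I_s}} :=
  [set [set i : 'I_s | (j <= i) && (i < j + r)] | j : 'I_s & j + r <= s].

Definition incr (s n : nat) (f : {ffun 'I_s -> 'I_n}) : bool :=
  [forall i : 'I_s, forall j : 'I_s, (i < j) ==> (f i < f j)].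

Definition copy_of (r s n : nat) (f : {ffun 'I_s -> 'I_n}) : {set {set 'I_n}} :=
  [set (fun x => f x) @: e | e : {set 'I_s} in path_edges r s].

Definition path_copies (r s n : nat) : {set {set {set 'I_n}}} :=
  [set copy_of r s n f | f : {ffun 'I_s -> 'I_n} & incr s n f].

Definition nu_path (r s n : nat) : nat :=
  \max_(P : {set {set {set 'I_n}}} |
          (P \subset path_copies r s n) &&
          [forall C in P, forall D in P, (C != D) ==> [disjoint C & D]])
     #|P|.

Local Open Scope ring_scope.
Local Open Scope classical_set_scope.

Definition frac_packing (R : realType) (r s n : nat)
    (w : {set {set 'I_n}} -> R) : Prop :=
  (forall C, C \in path_copies r s n -> 0 <= w C) /\
  (forall e : {set 'I_n}, #|e| = r ->
     \sum_(C in path_copies r s n | e \in C) w C <= 1).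

Definition nu_star_path (R : realType) (r s n : nat) : R :=
  sup [set (\sum_(C in path_copies r s n) w C)
       | w in [set w : {set {set 'I_n}} -> R | frac_packing R r s n w]].

Definition frac_transversal (R : realType) (r s n : nat)
    (w : {set 'I_n} -> R) : Prop :=
  (forall e : {set 'I_n}, #|e| = r -> 0 <= w e) /\
  (forall C, C \in path_copies r s n -> 1 <= \sum_(e in C) w e).

Definition tau_star_path (R : realType) (r s n : nat) : R :=
  inf [set (\sum_(e : {set 'I_n} | #|e| == r) w e)
       | w in [set w : {set 'I_n} -> R | frac_transversal R r s n w]].

From HB Require Import structures.
From mathcomp Require Import all_boot all_order all_algebra.
From mathcomp Require Import boolp classical_sets reals.
From mathcomp Require Import zify lra.
Import Order.TTheory GRing.Theory Num.Theory.

(* Write s = k r and m = n %/ k.  For every r-subset T = {t_0 < ... < t_(r-1)} of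
   [0, m), the map p |-> (p %/ r) m + t_(p %% r) embeds the path P^(r)_s in [0, n).
   Any r consecutive vertices of the path meet every residue class mod r exactly
   once, so each edge of such a copy recovers T from the residues mod m of its
   vertices: these 'C(m, r) copies are edge-disjoint.
   Conversely, cut [0, n) into k blocks of about m vertices and give weight 1/k to
   every r-set inside a block.  Along a copy the block index is nondecreasing with
   at most k - 1 jumps, each spoiling at most r - 1 of the k r - r + 1 edges, so at
   least k edges lie inside a block: this is a fractional transversal of weight at
   most 'C(m + k, r).
   By LP duality nu <= nu* <= tau*, so all three lie between 'C(m, r) and
   'C(m + k, r), and both bounds are (k^-r + o(1)) 'C(n, r) = ((r/s)^r + o(1)) 'C(n, r). *)

Set Implicit Arguments.
Unset Strict Implicit.
Unset Printing Implicit Defensive.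

(** * Copies of the path *)

Definition window (r s j : nat) : {set 'I_s} := [set i : 'I_s | j <= i < j + r].

Lemma path_edgesE r s : path_edges r s = [set window r s j | j : 'I_s & j + r <= s].
Proof. by []. Qed.

Lemma card_window r s (j : 'I_s) : j + r <= s -> #|window r s j| = r.
Proof.
move=> jr; pose h (t : 'I_r) : 'I_s := insubd j (j + t).
have hE (t : 'I_r) : val (h t) = j + t.
  by rewrite /h val_insubd; case: ifP => //; move: (ltn_ord t); lia.
have h_inj : injective h by move=> t t' /(congr1 val); rewrite !hE => /addnI /val_inj.
rewrite -[RHS](card_ord r) -(card_imset _ h_inj); apply: eq_card => i.
rewrite inE; apply/andP/imsetP => [[ji ijr]|[t _ ->]]; last first.
  by rewrite hE; move: (ltn_ord t); lia.
have ir : i - j < r by lia.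
by exists (Ordinal ir) => //; apply: val_inj; rewrite hE /=; lia.
Qed.

Lemma window_inj r s (j j' : 'I_s) : 0 < r -> window r s j = window r s j' -> j = j'.
Proof.
move=> r_gt0 jj'; apply/val_inj/eqP; rewrite eqn_leq.
have /[!inE] /andP[-> _] : j \in window r s j' by rewrite -jj' inE leqnn; lia.
by have /[!inE] /andP[-> _] : j' \in window r s j by rewrite jj' inE leqnn; lia.
Qed.

Lemma incr_inj s n (f : {ffun 'I_s -> 'I_n}) : incr s n f -> injective f.
Proof.
move=> /forallP f_incr i j fij; apply/val_inj/eqP; case: ltngtP => // [ij|ji].
  by have := implyP (forallP (f_incr i) j) ij; rewrite fij ltnn.
by have := implyP (forallP (f_incr j) i) ji; rewrite fij ltnn.
Qed.

Lemma incr_leq s n (f : {ffun 'I_s -> 'I_n}) (i j : 'I_s) :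
  incr s n f -> i <= j -> f i <= f j.
Proof.
move=> /forallP f_incr; rewrite leq_eqVlt => /orP[/eqP/val_inj -> //|ij].
exact/ltnW/(implyP (forallP (f_incr i) j)).
Qed.

Lemma mem_copy_ofP r s n (f : {ffun 'I_s -> 'I_n}) e :
  e \in copy_of r s n f -> exists2 j : 'I_s, j + r <= s & e = [set f x | x in window r s j].
Proof. by case/imsetP => E /[1!path_edgesE] /imsetP[j /[1!inE] jr -> ->]; exists j. Qed.

Lemma mem_copy_of r s n (f : {ffun 'I_s -> 'I_n}) (j : 'I_s) :
  j + r <= s -> [set f x | x in window r s j] \in copy_of r s n f.
Proof. by move=> jr; apply: imset_f; rewrite path_edgesE imset_f ?inE. Qed.

Lemma card_path_copy_edge r s n C e :
  C \in path_copies r s n -> e \in C -> #|e| = r.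
Proof.
case/imsetP => f /[1!inE] f_incr -> /mem_copy_ofP[j jr ->].
by rewrite card_imset ?card_window //; apply: incr_inj.
Qed.

Definition edge_disjoint n (P : {set {set {set 'I_n}}}) : bool :=
  [forall C in P, forall D in P, (C != D) ==> [disjoint C & D]].

(** * LP duality *)

Lemma sum_nat_of_bool (T : finType) (a b : pred T) :
  \sum_(x | a x) (b x : nat) = #|[pred x | a x && b x]|.
Proof. by rewrite -sum1_card big_mkcondr; apply: eq_bigr => x _; case: (b x). Qed.

Section Packings.

Local Open Scope ring_scope.

Variables (R : realType) (r s n : nat).

Lemma frac_packing_le_transversal (p : {set {set 'I_n}} -> R) (t : {set 'I_n} -> R) :
  frac_packing R r s n p -> frac_transversal R r s n t ->
  \sum_(C in path_copies r s n) p C <= \sum_(e : {set 'I_n} | #|e| == r) t e.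
Proof.
case=> p_ge0 p_le1 [t_ge0 t_ge1].
apply: (@le_trans _ _ (\sum_(C in path_copies r s n) p C * \sum_(e in C) t e)).
  by apply: ler_sum => C CP; apply: ler_peMr; [exact: p_ge0 | exact: t_ge1].
have edges_of_copy C : C \in path_copies r s n -> p C * \sum_(e in C) t e =
    \sum_(e : {set 'I_n} | #|e| == r) (if e \in C then p C * t e else 0).
  move=> CP; rewrite mulr_sumr -big_mkcondr; apply: eq_bigl => e.
  by case eC: (e \in C); rewrite ?andbF ?andbT // (card_path_copy_edge CP eC) eqxx.
rewrite (eq_bigr _ edges_of_copy) exchange_big /=; apply: ler_sum => e /eqP er.
rewrite -big_mkcondr -mulr_suml mulrC -[leRHS]mulr1.
by apply: ler_wpM2l; [exact: t_ge0 | exact: p_le1].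
Qed.

Variable P : {set {set {set 'I_n}}}.
Hypothesis P_copies : P \subset path_copies r s n.

Lemma frac_packing_indicator :
  edge_disjoint P -> frac_packing R r s n (fun C => (C \in P)%:R).
Proof.
move=> /forall_inP P_disj; split=> [C _|e _]; first exact: ler0n.
rewrite -natr_sum sum_nat_of_bool lern1.
apply/card_le1_eqP => C D /[!inE] /andP[/andP[_ eC] CP] /andP[/andP[_ eD] DP].
apply/eqP/negPn/negP => DC.
have := implyP (forall_inP (P_disj D DP) C CP) DC.
by move/disjointFr/(_ eD); rewrite eC.
Qed.

Lemma sum_indicator : \sum_(C in path_copies r s n) (C \in P)%:R = #|P|%:R :> R.
Proof.
rewrite -natr_sum sum_nat_of_bool; congr _%:R; apply: eq_card => C.
by rewrite !inE andb_idl // => /(fintype.subsetP P_copies).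
Qed.

Lemma nu_path_ge_card : edge_disjoint P -> (#|P| <= nu_path r s n)%N.
Proof. by move=> P_disj; apply: (leq_bigmax_cond P); rewrite P_copies. Qed.

End Packings.

Section Sandwich.

Local Open Scope ring_scope.

Variables (R : realType) (r s n : nat) (t : {set 'I_n} -> R).
Hypothesis t_transversal : frac_transversal R r s n t.

Let zero_packing : frac_packing R r s n (fun=> 0).
Proof. by split=> [//|e _]; rewrite big1 ?ler01. Qed.

Lemma nu_star_path_ge (p : {set {set 'I_n}} -> R) : frac_packing R r s n p ->
  \sum_(C in path_copies r s n) p C <= nu_star_path R r s n.
Proof.
move=> p_packing; apply: ub_le_sup; last by exists p.
by exists (\sum_(e : {set 'I_n} | #|e| == r) t e) => _ [q q_packing <-];
  exact: frac_packing_le_transversal.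
Qed.

Lemma nu_path_le_nu_star : (nu_path r s n)%:R <= nu_star_path R r s n.
Proof.
rewrite /nu_path; elim/big_ind: _ => [|a b ha hb|P /andP[P_copies P_disj]].
- by have := nu_star_path_ge zero_packing; rewrite big1.
- by rewrite /maxn; case: ifP.
- by rewrite -(sum_indicator R P_copies); exact/nu_star_path_ge/frac_packing_indicator.
Qed.

Lemma nu_star_le_tau_star : nu_star_path R r s n <= tau_star_path R r s n.
Proof.
apply: ge_sup => [|_ [p p_packing <-]].
  by exists (\sum_(C in path_copies r s n) 0); exists (fun=> 0).
apply: lb_le_inf => [|_ [q q_transversal <-]].
  by exists (\sum_(e : {set 'I_n} | #|e| == r) t e); exists t.
exact: frac_packing_le_transversal.
Qed.

Lemma tau_star_le_transversal :
  tau_star_path R r s n <= \sum_(e : {set 'I_n} | #|e| == r) t e.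
Proof.
apply: ge_inf; last by exists t.
exists 0 => _ [q [q_ge0 _] <-]; apply: sumr_ge0 => e /eqP; exact: q_ge0.
Qed.

Lemma path_parameters_between (P : {set {set {set 'I_n}}}) :
  P \subset path_copies r s n -> edge_disjoint P ->
  let L := #|P|%:R in let U := \sum_(e : {set 'I_n} | #|e| == r) t e in
  [/\ L <= (nu_path r s n)%:R <= U, L <= nu_star_path R r s n <= U
    & L <= tau_star_path R r s n <= U].
Proof.
move=> P_copies P_disj L U.
have L_nu : L <= (nu_path r s n)%:R by rewrite ler_nat nu_path_ge_card.
have nu_tau := le_trans nu_path_le_nu_star nu_star_le_tau_star.
have tau_U := tau_star_le_transversal.
rewrite L_nu (le_trans L_nu nu_path_le_nu_star) (le_trans L_nu nu_tau) tau_U.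
by rewrite (le_trans nu_star_le_tau_star tau_U) (le_trans nu_tau tau_U).
Qed.

End Sandwich.

(** * An edge-disjoint packing from residues *)

Lemma nth_val_lt m (t : seq 'I_m) i : 0 < m -> nth 0 (map val t) i < m.
Proof.
move=> m_gt0; case: (ltnP i (size (map val t))) => [i_lt|]; last by move/(nth_default 0) ->.
by have /mapP[x _ ->] := mem_nth 0 i_lt; exact: ltn_ord.
Qed.

Definition interleave r m (t : seq 'I_m) (p : nat) : nat :=
  p %/ r * m + nth 0 (map val t) (p %% r).

Section ResiduePacking.

Variables (r s k m n : nat).
Hypotheses (r_gt0 : 0 < r) (k_gt0 : 0 < k) (m_gt0 : 0 < m).
Hypotheses (sE : s = k * r) (km_le : k * m <= n.+1).

Lemma interleave_mod (t : seq 'I_m) p :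
  interleave r t p %% m = nth 0 (map val t) (p %% r).
Proof. by rewrite modnMDl modn_small // nth_val_lt. Qed.

Lemma interleave_lt (t : seq 'I_m) (p : 'I_s) : interleave r t p < n.+1.
Proof.
have p_lt : p %/ r < k by rewrite ltn_divLR // -sE.
have : (p %/ r).+1 * m <= k * m by rewrite leq_mul2r p_lt orbT.
by have := nth_val_lt t (p %% r) m_gt0; rewrite /interleave mulSn; lia.
Qed.

Lemma interleave_incr (t : r.-tuple 'I_m) p q : sorted ltn (map val t) -> p < q ->
  interleave r t p < interleave r t q.
Proof.
move=> t_sorted pq; rewrite /interleave.
have tp := nth_val_lt t (p %% r) m_gt0; have tq := nth_val_lt t (q %% r) m_gt0.
have [p_q|q_p] := ltnP (p %/ r) (q %/ r).
  have : (p %/ r).+1 * m <= q %/ r * m by rewrite leq_mul2r p_q orbT.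
  by rewrite mulSn; lia.
have pqE : p %/ r = q %/ r by apply/anti_leq; rewrite q_p leq_div2r // ltnW.
have p_eq := divn_eq p r; have q_eq := divn_eq q r.
rewrite pqE ltn_add2l; apply: (sorted_ltn_nth ltn_trans 0 t_sorted).
- by rewrite inE size_map size_tuple ltn_pmod.
- by rewrite inE size_map size_tuple ltn_pmod.
- by rewrite pqE in p_eq; lia.
Qed.

Definition interleave_map (t : r.-tuple 'I_m) : {ffun 'I_s -> 'I_n.+1} :=
  [ffun p : 'I_s => inord (interleave r t p)].

Lemma interleave_mapE (t : r.-tuple 'I_m) (p : 'I_s) :
  val (interleave_map t p) = interleave r t p.
Proof. by rewrite ffunE /= inordK // interleave_lt. Qed.

Lemma incr_interleave_map (t : r.-tuple 'I_m) :
  sorted ltn (map val t) -> incr s n.+1 (interleave_map t).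
Proof.
move=> t_sorted; apply/forallP => p; apply/forallP => q; apply/implyP => pq.
by rewrite !interleave_mapE interleave_incr.
Qed.

Lemma mem_interleave_window (t : r.-tuple 'I_m) (j : 'I_s) a : j + r <= s ->
  (a \in map val t) =
  [exists x in [set interleave_map t y | y in window r s j], val x %% m == a].
Proof.
move=> jr; apply/idP/exists_inP => [a_t|[_ /imsetP[y _ ->]]]; last first.
  rewrite interleave_mapE interleave_mod => /eqP <-.
  by rewrite mem_nth // size_map size_tuple ltn_pmod.
have i_lt : index a (map val t) < r by move: a_t; rewrite -index_mem size_map size_tuple.
set i := index a (map val t) in i_lt.
have j_eq := divn_eq j r; have j_mod := ltn_pmod j r_gt0.
pose p := if j %% r <= i then j %/ r * r + i else (j %/ r).+1 * r + i.
have p_mod : p %% r = i by rewrite /p; case: ifP => _; rewrite modnMDl modn_small.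
have p_window : j <= p < j + r by rewrite /p; case: ifP => ?; rewrite ?mulSn; lia.
have p_lt : p < s by lia.
exists (interleave_map t (Ordinal p_lt)); first by apply: imset_f; rewrite inE.
by rewrite interleave_mapE interleave_mod p_mod nth_index.
Qed.

Lemma interleave_copy_inj (t t' : r.-tuple 'I_m) e :
  sorted ltn (map val t) -> sorted ltn (map val t') ->
  e \in copy_of r s n.+1 (interleave_map t) -> e \in copy_of r s n.+1 (interleave_map t') ->
  t = t'.
Proof.
move=> t_sorted t'_sorted /mem_copy_ofP[j jr ->] /mem_copy_ofP[j' j'r e_eq].
have t_t' : map val t =i map val t'.
  by move=> a; rewrite (mem_interleave_window _ _ jr) (mem_interleave_window _ _ j'r) e_eq.
by apply/val_inj/(inj_map val_inj)/(irr_sorted_eq ltn_trans ltnn t_sorted t'_sorted).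
Qed.

Definition residue_packing : {set {set {set 'I_n.+1}}} :=
  [set copy_of r s n.+1 (interleave_map t)
  | t in [set t : r.-tuple 'I_m | sorted ltn (map val t)]].

Lemma residue_packing_sub : residue_packing \subset path_copies r s n.+1.
Proof.
apply/fintype.subsetP => _ /imsetP[t /[1!inE] t_sorted ->].
by apply: imset_f; rewrite inE incr_interleave_map.
Qed.

Lemma edge_disjoint_residue_packing : edge_disjoint residue_packing.
Proof.
apply/forall_inP => _ /imsetP[t /[1!inE] t_sorted ->].
apply/forall_inP => _ /imsetP[t' /[1!inE] t'_sorted ->]; apply/implyP => tt'.
rewrite -setI_eq0; apply/negPn/set0Pn => -[e /setIP[e_t e_t']].
by move: tt'; rewrite (interleave_copy_inj t_sorted t'_sorted e_t e_t') eqxx.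
Qed.

Lemma card_residue_packing : #|residue_packing| = 'C(m, r).
Proof.
rewrite card_in_imset ?card_ltn_sorted_tuples // => t t' /[!inE] t_sorted t'_sorted tt'.
have s_gt0 : 0 < s by rewrite sE muln_gt0 k_gt0.
have r_s : Ordinal s_gt0 + r <= s by rewrite /= sE leq_pmull.
have e_t := mem_copy_of (interleave_map t) r_s.
by apply: (interleave_copy_inj t_sorted t'_sorted e_t); rewrite -tt'.
Qed.

End ResiduePacking.

(** * A fractional transversal from blocks *)

(* The block of [x] when [0, n) is cut into [k] intervals of length
   [m = n %/ k], the last one also absorbing the remainder [n %% k]. *)
Definition block (m k x : nat) : nat := minn (x %/ m) k.-1.

Lemma block_homo m k : {homo block m k : x y / x <= y}.
Proof. by move=> x y /(leq_div2r m); rewrite /block; lia. Qed.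

Lemma block_le_pred m k x : block m k x <= k.-1.
Proof. exact: geq_minr. Qed.

Definition in_one_block m k n (e : {set 'I_n}) : bool :=
  [forall x in e, forall y in e, block m k x == block m k y].

Definition block_transversal (R : realType) m k {n} (e : {set 'I_n}) : R :=
  ((in_one_block m k e)%:R / k%:R)%R.

Section BlockWeight.

Variables (n m k : nat).
Hypotheses (m_gt0 : 0 < m) (k_gt0 : 0 < k) (nkm : n %/ k = m).

Lemma block_range (x : 'I_n) j : block m k x = j -> j * m <= x < j * m + (m + k).
Proof.
have x_eq := divn_eq x m; have x_mod := ltn_pmod x m_gt0.
have n_eq := divn_eq n k; have n_mod := ltn_pmod n k_gt0; rewrite nkm in n_eq.
have := ltn_ord x; rewrite /block; case: (leqP (x %/ m) k.-1) => x_lt; first lia.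
move=> xn <-.
have: k.-1 * m <= x %/ m * m by rewrite leq_mul2r (ltnW x_lt) orbT.
by case: k k_gt0 n_eq n_mod {x_lt} => // k' _; nia.
Qed.

Lemma card_block j : #|[set x : 'I_n | block m k x == j]| <= m + k.
Proof.
rewrite cardE -(size_map val) -(size_iota (j * m) (m + k)).
apply: uniq_leq_size; first by rewrite (map_inj_uniq val_inj) enum_uniq.
by move=> _ /mapP[x /[!mem_enum] /[!inE] /eqP /block_range xj ->]; rewrite mem_iota.
Qed.

Lemma block_transversal_weight (R : realType) r : 0 < r ->
  (\sum_(e : {set 'I_n} | #|e| == r) block_transversal R m k e <= 'C(m + k, r)%:R)%R.
Proof.
move=> r_gt0; set A := [set e : {set 'I_n} | (#|e| == r) && in_one_block m k e].
have sumA : \sum_(e : {set 'I_n} | #|e| == r) (in_one_block m k e : nat) = #|A|.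
  by rewrite sum_nat_of_bool; apply: eq_card => e; rewrite !inE.
pose D (j : 'I_k) :=
  [set e : {set 'I_n} | e \subset [set x : 'I_n | block m k x == j] & #|e| == r].
have A_cover : A \subset \bigcup_(j < k) D j.
  apply/fintype.subsetP => e /[!inE] /andP[/eqP er /forall_inP e_block].
  have /card_gt0P[x xe] : 0 < #|e| by rewrite er.
  have xk : block m k x < k by have := block_le_pred m k x; lia.
  apply/bigcupP; exists (Ordinal xk) => //; rewrite inE er eqxx andbT.
  by apply/fintype.subsetP => y ye; rewrite inE eq_sym; exact: (forall_inP (e_block x xe)).
have cardA : #|A| <= k * 'C(m + k, r).
  apply: leq_trans (subset_leq_card A_cover) _.
  apply: leq_trans (unstable.card_big_setU _ _ _) _.
  rewrite big_mkcond -[k in k * _]card_ord -sum_nat_const /=; apply: leq_sum => j _.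
  by rewrite cards_draws leq_bin2l // card_block.
rewrite /block_transversal -mulr_suml -natr_sum sumA ler_pdivrMr ?ltr0n //.
by rewrite -natrM ler_nat mulnC.
Qed.

End BlockWeight.

Lemma sum_shift_le (g : nat -> nat) W d K : (forall i, i < W + d -> g i <= K) ->
  \sum_(i < W) g (i + d) <= \sum_(i < W) g i + d * K.
Proof.
move=> g_le; rewrite -(big_mkord xpredT g) -(big_mkord xpredT (fun i => g (i + d))).
have -> : \sum_(0 <= i < W) g (i + d) = \sum_(d <= i < W + d) g i.
  by rewrite -{2}(add0n d) big_addn addnK.
apply: (@leq_trans (\sum_(0 <= i < W + d) g i)).
  by rewrite [leqRHS](@big_cat_nat _ _ _ d) ?leq_addl //= leq_addl.
rewrite (@big_cat_nat _ _ _ W) ?leq_addr //= leq_add2l.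
rewrite -[X in X * K](addKn W d) -sum_nat_const_nat big_nat_cond [leqRHS]big_nat_cond.
by apply: leq_sum => i /andP[/andP[_ i_lt] _]; exact: g_le.
Qed.

Lemma nondecreasing_constant_windows (g : nat -> nat) r k : 0 < r -> 0 < k ->
  (forall i j, i <= j -> j < k * r -> g i <= g j) ->
  (forall i, i < k * r -> g i <= k.-1) ->
  k <= \sum_(j < k * r - r + 1) (g j == g (j + r.-1)).
Proof.
move=> r_gt0 k_gt0 g_homo g_le; set W := k * r - r + 1.
have W_r : W + r.-1 = k * r by rewrite /W; nia.
have W_k : W = r.-1 * k.-1 + k by rewrite /W; nia.
have jump (j : 'I_W) : g j + (g j != g (j + r.-1)) <= g (j + r.-1).
  have := g_homo j (j + r.-1) (leq_addr _ _) ltac:(move: (ltn_ord j); lia).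
  by case: eqP => [->|]; lia.
have jumps : \sum_(j < W) (g j != g (j + r.-1)) <= r.-1 * k.-1.
  have := @sum_shift_le g W r.-1 k.-1 ltac:(by move=> i; rewrite W_r; exact: g_le).
  have : \sum_(j < W) (g j + (g j != g (j + r.-1))) <= \sum_(j < W) g (j + r.-1).
    by apply: leq_sum => j _; exact: jump.
  by rewrite big_split /=; lia.
have windows : \sum_(j < W) (g j == g (j + r.-1)) + \sum_(j < W) (g j != g (j + r.-1)) = W.
  rewrite -big_split /= -[W in RHS]card_ord -sum1_card.
  by apply: eq_bigr => j _; case: eqP.
lia.
Qed.

Lemma in_one_block_imset m k s n (f : {ffun 'I_s -> 'I_n}) (A : {set 'I_s}) (a b : 'I_s) :
  incr s n f -> {in A, forall x : 'I_s, a <= x <= b} ->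
  block m k (f a) = block m k (f b) -> in_one_block m k [set f x | x in A].
Proof.
move=> f_incr A_ab fab.
have blockE x : x \in A -> block m k (f x) = block m k (f a).
  move=> /A_ab /andP[ax xb]; apply/anti_leq/andP; split; last exact/block_homo/incr_leq.
  by rewrite fab; apply/block_homo/incr_leq.
apply/forall_inP => _ /imsetP[x xA ->]; apply/forall_inP => _ /imsetP[y yA ->].
by rewrite !blockE.
Qed.

Lemma frac_transversal_block (R : realType) r s n m k : 0 < r -> 0 < k -> s = k * r ->
  frac_transversal R r s n (block_transversal R m k).
Proof.
move=> r_gt0 k_gt0 sE; split=> [e _|C /imsetP[f /[1!inE] f_incr ->]].
  by rewrite /block_transversal divr_ge0 ?ler0n.
have s_gt0 : 0 < s by rewrite sE muln_gt0 k_gt0.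
pose g i := block m k (f (insubd (Ordinal s_gt0) i)).
have gE (a : 'I_s) : g a = block m k (f a) by rewrite /g valKd.
have g_homo i j : i <= j -> j < k * r -> g i <= g j.
  move=> ij jkr; apply/block_homo/incr_leq => //.
  by rewrite !val_insubd ifT ?ifT ?sE // (leq_ltn_trans ij jkr).
have window_weight (j : 'I_s) : j + r <= s ->
    ((g j == g (j + r.-1)%N)%:R / k%:R
       <= block_transversal R m k [set f x | x in window r s j])%R.
  move=> jr; rewrite /block_transversal; case: eqP => [gj|_]; last first.
    by rewrite mul0r divr_ge0 ?ler0n.
  have jr' : j + r.-1 < s by lia.
  rewrite (@in_one_block_imset _ _ _ _ _ _ j (Ordinal jr') f_incr) //.
    by move=> x /[!inE] /andP[jx xj] /=; lia.
  by rewrite -gE gj -gE.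
rewrite /copy_of big_imset /=; last by move=> E1 E2 _ _; apply/imset_inj/incr_inj.
rewrite path_edgesE big_imset /=; last by move=> j j' _ _; apply: window_inj.
apply: (@le_trans _ _ (\sum_(j in [set j : 'I_s | (j + r <= s)%N])
                        (g j == g (j + r.-1)%N)%:R / k%:R)%R); last first.
  by apply: ler_sum => j /[!inE]; exact: window_weight.
rewrite -mulr_suml -natr_sum ler_pdivlMr ?ltr0n // mul1r ler_nat.
rewrite (eq_bigl (fun j : 'I_s => j < k * r - r + 1)) => [|j]; last first.
  by rewrite inE; have js := ltn_ord j; have kr := leq_pmull r k_gt0; apply/idP/idP; lia.
rewrite -(big_ord_widen _ (fun j => (g j == g (j + r.-1)) : nat)) ?sE; last lia.
exact: (nondecreasing_constant_windows r_gt0 k_gt0 g_homo (fun i _ => block_le_pred m k _)).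
Qed.

(** * Asymptotics *)

Lemma leq_expn2r m n e : m <= n -> m ^ e <= n ^ e.
Proof. by case: e => // e; rewrite leq_exp2r. Qed.

Lemma ffact_leq_expn n r : n ^_ r <= n ^ r.
Proof.
elim: r n => [|r IHr] n; first by rewrite ffactn0.
by rewrite ffactnS expnS leq_mul // (leq_trans (IHr _)) ?leq_expn2r ?leq_pred.
Qed.

Lemma expn_subn_leq_ffact n r : (n - r) ^ r <= n ^_ r.
Proof.
elim: r n => [|r IHr] n; first by rewrite ffactn0.
rewrite ffactnS expnS leq_mul ?leq_subr // (leq_trans _ (IHr _)) // leq_expn2r //; lia.
Qed.

(* With m = n %/ k we have n - k < k m <= n, hence k (m + k) <= n + k ^ 2 and
   k (m - r) >= n - k - k r. *)
Lemma block_binomials_between k r n a : 0 < k -> k * (k + r + 1) + r <= a ->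
  [/\ (n - a) ^ r <= k ^ r * ('C(n %/ k, r) * r`!),
      k ^ r * ('C(n %/ k + k, r) * r`!) <= (n + a) ^ r,
      (n - a) ^ r <= 'C(n, r) * r`! & 'C(n, r) * r`! <= (n + a) ^ r].
Proof.
move=> k_gt0 a_ge; rewrite !bin_ffact.
have n_eq := divn_eq n k; have n_mod := ltn_pmod n k_gt0.
split.
- apply: (@leq_trans ((k * (n %/ k - r)) ^ r)); first by rewrite leq_expn2r // mulnBr; nia.
  by rewrite expnMn leq_mul2l expn_subn_leq_ffact orbT.
- apply: leq_trans (leq_mul (leqnn _) (ffact_leq_expn _ _)) _.
  by rewrite -expnMn leq_expn2r // mulnDr; nia.
- by apply: leq_trans (expn_subn_leq_ffact _ _); rewrite leq_expn2r //; lia.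
- by apply: leq_trans (ffact_leq_expn _ _) _; rewrite leq_expn2r //; lia.
Qed.

Local Open Scope ring_scope.

Lemma ler_subrXX (R : realDomainType) (x y : R) n : 0 <= y <= x ->
  x ^+ n.+1 - y ^+ n.+1 <= n.+1%:R * (x - y) * x ^+ n.
Proof.
case/andP=> y_ge0 yx; have x_ge0 := le_trans y_ge0 yx.
rewrite subrXX [_%:R * _]mulrC -mulrA ler_wpM2l ?subr_ge0 //.
rewrite mulr_natl -[in leRHS](card_ord n.+1) -sumr_const.
apply: ler_sum => i _.
have -> : x ^+ n = x ^+ (n - i) * x ^+ i by rewrite -exprD subnK // -ltnS.
by rewrite ler_wpM2l ?exprn_ge0 // lerXn2r.
Qed.

(* Once N >= 3 a, x = N + a and y = N - a satisfy x <= 2 y, so that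
   x ^ (r + 1) - y ^ (r + 1) <= (r + 1) (2 a) x ^ r <= (r + 1) (2 a) 2 ^ r y ^ r,
   which is at most d y ^ (r + 1) as soon as y >= (r + 1) (2 a) 2 ^ r / d. *)
Lemma expn_addn_le_subn (R : realType) a r (d : R) : 0 < d ->
  exists N0, forall N, (N0 <= N)%N ->
    ((N + a) ^ r)%:R <= (1 + d) * ((N - a) ^ r)%:R :> R.
Proof.
move=> d_gt0; case: r => [|r]; first by exists 0%N => N _; rewrite !expn0 mulr1 lerDl ltW.
pose X : R := (r.+1 * (2 * a) * 2 ^ r)%:R.
have X_d_ge0 : 0 <= X / d by rewrite divr_ge0 // ?ler0n // ltW.
exists (3 * a + Num.bound (X / d))%N => N N_ge.
pose x : R := (N + a)%:R; pose y : R := (N - a)%:R.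
have xy : x - y = (2 * a)%:R by rewrite -natrB; [congr _%:R|]; lia.
have y_ge0 : 0 <= y by rewrite ler0n.
have yx : y <= x by rewrite ler_nat; lia.
have x_le : x <= 2 * y by rewrite -[2]/(2%:R) -natrM ler_nat; lia.
have X_le : X <= d * y.
  rewrite mulrC -ler_pdivrMr //; apply: le_trans (ltW (archi_boundP X_d_ge0)) _.
  by rewrite ler_nat; lia.
have x_le_2y : x ^+ r <= 2 ^+ r * y ^+ r.
  by rewrite -exprMn lerXn2r ?nnegrE ?mulr_ge0 // (le_trans y_ge0 yx).
rewrite !natrX -/x -/y mulrDl mul1r -lerBlDl.
apply: le_trans (ler_subrXX r _) _; first by rewrite y_ge0 yx.
apply: (@le_trans _ _ (X * y ^+ r)); last by rewrite exprS mulrA ler_wpM2r ?exprn_ge0.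
by rewrite xy /X !natrM natrX -!mulrA !ler_wpM2l ?ler0n.
Qed.

Lemma relative_error_bounds (R : realFieldType) (K b L U eps : R) :
  0 < K -> 0 < eps -> 0 <= b ->
  b <= (1 + eps * K) * (K * L) -> K * U <= (1 + eps * K) * b ->
  K^-1 * b - eps * b <= L /\ U <= K^-1 * b + eps * b.
Proof.
move=> K_gt0 eps_gt0 b_ge0 b_le U_le.
have d_gt0 : 0 < eps * K by rewrite mulr_gt0.
have d2b_ge0 : 0 <= eps * K * (eps * K) * b by rewrite !mulr_ge0 // ltW.
split; rewrite -(ler_pM2l K_gt0) mulrDr mulrA divff ?lt0r_neq0 // mul1r.
- by rewrite mulrN mulrA [K * eps]mulrC; nra.
- by rewrite mulrA [K * eps]mulrC; lra.
Qed.

Lemma binomial_blocks_asymptotics (R : realType) k r (eps : R) : (0 < k)%N -> 0 < eps ->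
  exists N, forall n, (N <= n)%N ->
    let c := (k ^ r)%:R^-1 in let b := 'C(n, r)%:R in
    c * b - eps * b <= 'C(n %/ k, r)%:R /\ 'C(n %/ k + k, r)%:R <= c * b + eps * b.
Proof.
move=> k_gt0 eps_gt0; pose K : R := (k ^ r)%:R; pose F : R := r`!%:R.
have K_gt0 : 0 < K by rewrite ltr0n expn_gt0 k_gt0.
have F_gt0 : 0 < F by rewrite ltr0n fact_gt0.
pose a := (k * (k + r + 1) + r)%N.
have [N shift] := expn_addn_le_subn a r (mulr_gt0 eps_gt0 K_gt0).
exists N => n n_ge c b; have := shift n n_ge.
have [lo up b_lo b_up] := block_binomials_between n k_gt0 (leqnn a).
move: lo up b_lo b_up; rewrite -!(ler_nat R) !natrM -/K -/F -/b.
set P := ((n + a) ^ r)%:R; set Q := ((n - a) ^ r)%:R => lo up b_lo b_up PQ.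
have one_d_ge0 : 0 <= 1 + eps * K by rewrite addr_ge0 ?mulr_ge0 ?ltW.
apply: relative_error_bounds => //; rewrite -/K -(ler_pM2r F_gt0) -!mulrA.
- by apply: le_trans b_up (le_trans PQ _); rewrite ler_wpM2l.
- by apply: le_trans up (le_trans PQ _); rewrite ler_wpM2l.
Qed.

Lemma path_parameters_binomial_bounds (R : realType) r s k n :
  (0 < r)%N -> s = (k * r)%N -> (0 < n %/ k)%N ->
  let L := 'C(n %/ k, r)%:R in let U := 'C(n %/ k + k, r)%:R in
  [/\ L <= (nu_path r s n)%:R <= U, L <= nu_star_path R r s n <= U
    & L <= tau_star_path R r s n <= U].
Proof.
case: n => [|n] r_gt0 sE m_gt0 L U; first by rewrite div0n in m_gt0.
have k_gt0 : (0 < k)%N by apply: contraTT m_gt0; rewrite -eqn0Ngt => /eqP ->; rewrite divn0.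
have km_le : (k * (n.+1 %/ k) <= n.+1)%N by rewrite mulnC leq_divM.
have t_transversal := frac_transversal_block R n.+1 (n.+1 %/ k) r_gt0 k_gt0 sE.
have weight := block_transversal_weight m_gt0 k_gt0 (erefl _) R r_gt0.
have := path_parameters_between t_transversal
  (residue_packing_sub r_gt0 k_gt0 m_gt0 sE km_le)
  (edge_disjoint_residue_packing r_gt0 k_gt0 m_gt0 sE km_le).
rewrite /= (card_residue_packing r_gt0 k_gt0 m_gt0 sE km_le).
case=> /andP[L_nu nu_U] /andP[L_star star_U] /andP[L_tau tau_U].
by rewrite L_nu L_star L_tau !(le_trans _ weight).
Qed.

Theorem theorem3p3 (R : realType) (r s : nat) :
  (0 < r)%N -> (0 < s)%N -> (r %| s)%N ->
  forall eps : R, 0 < eps ->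
  exists N : nat, forall n : nat, (N <= n)%N ->
    let c := (r%:R / s%:R) ^+ r in
    let b := ('C(n, r))%:R : R in
    `| (nu_path r s n)%:R - c * b | <= eps * b /\
    `| nu_star_path R r s n - c * b | <= eps * b /\
    `| tau_star_path R r s n - c * b | <= eps * b.
Proof.
move=> r_gt0 s_gt0 r_s eps eps_gt0; set k := (s %/ r)%N.
have sE : s = (k * r)%N by rewrite divnK.
have k_gt0 : (0 < k)%N by move: s_gt0; rewrite sE muln_gt0 => /andP[].
have [N near] := binomial_blocks_asymptotics r k_gt0 eps_gt0.
exists (N + k)%N => n n_ge c b.
have [lo up] := near n (leq_trans (leq_addr k N) n_ge).
have m_gt0 : (0 < n %/ k)%N by rewrite divn_gt0 // (leq_trans (leq_addl N k) n_ge).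
have cE : c = (k ^ r)%:R^-1.
  by rewrite /c sE natrM invfM mulrCA divff ?mulr1 ?natrX ?exprVn // pnatr_eq0 -lt0n.
have within X : 'C(n %/ k, r)%:R <= X <= 'C(n %/ k + k, r)%:R -> `|X - c * b| <= eps * b.
  by case/andP => LX XU; rewrite cE ler_distl (le_trans lo LX) (le_trans XU up).
have [nu_b star_b tau_b] := path_parameters_binomial_bounds R r_gt0 sE m_gt0.
by rewrite !within.
Qed.
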